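(* Let $\varphi$ be a smooth skew-morphism of a finite group $A$, of order $n$, with power function $\pi:A\to\mathbb{Z}_n$. Then: (i) $\pi$ takes values in the unit group $\mathbb{Z}_n^*$ and is a group homomorphism $A\to\mathbb{Z}_n^*$ whose kernel is $\mathrm{Ker}\,\varphi$; (ii) for any $\varphi$-invariant normal subgroup $N$ of $A$, the induced skew-morphism $\bar\varphi$ of $A/N$ is smooth, and if $N=\mathrm{Ker}\,\varphi$ then $\bar\varphi$ is the identity permutation; (iii) for every positive integer $k$, $\varphi^k$ is a smooth skew-morphism of $A$; (iv) for every automorphism $\gamma$ of $A$, $\gamma^{-1}\varphi\gamma$ is a smooth skew-morphism of $A$.
   Context: A skew-morphism of a finite group $A$ is a permutation $\varphi$ of the set $A$ with $\varphi(1)=1$ for which there exists a function $\pi:A\to\mathbb{Z}_n$, where $n$ is the order of $\varphi$ as a permutation, such that $\varphi(xy)=\varphi(x)\varphi^{\pi(x)}(y)$ for all $x,y\in A$; $\pi$ is the power function. The kernel is $\mathrm{Ker}\,\varphi=\{x\in A:\pi(x)=1\}$, and the core is $\mathrm{Core}\,\varphi=\bigcap_{i=1}^n\varphi^i(\mathrm{Ker}\,\varphi)$, a $\varphi$-invariant normal subgroup. $\varphi$ is smooth if $\varphi(x)\in x\,\mathrm{Core}\,\varphi$ for all $x\in A$. For a $\varphi$-invariant normal subgroup $N$ (i.e. $\varphi(N)=N$), the induced skew-morphism of $A/N$ is $\bar\varphi(xN)=\varphi(x)N$, with power function $\bar\pi(xN)\equiv\pi(x)\pmod{|\bar\varphi|}$.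 *)

From HB Require Import structures.
From mathcomp Require Import all_boot all_fingroup.
Set Implicit Arguments. Unset Strict Implicit. Unset Printing Implicit Defensive.
Local Open Scope group_scope.

Section SkewDefs.
Variable gT : finGroupType.

(* pi is a power function for phi: phi(xy) = phi(x) phi^{pi(x)}(y).
   Values of pi are natural numbers read modulo n = #[phi]. *)
Definition skew_power (phi : {perm gT}) (pi : gT -> nat) : Prop :=
  forall x y : gT, phi (x * y) = phi x * (phi ^+ pi x)%g y.

Definition skew_morphism (phi : {perm gT}) : Prop :=
  phi 1 = 1 /\ exists pi, skew_power phi pi.

Definition skew_ker (phi : {perm gT}) (pi : gT -> nat) : {set gT} :=
  [set x | pi x == 1 %[mod #[phi]]].

Definition skew_core (phi : {perm gT}) (pi : gT -> nat) : {set gT} :=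
  \bigcap_(1 <= i < #[phi].+1) ((phi ^+ i)%g @: skew_ker phi pi).

Definition skew_smooth (phi : {perm gT}) (pi : gT -> nat) : Prop :=
  forall x : gT, phi x \in x *: skew_core phi pi.

(* phi is a smooth skew-morphism (smoothness w.r.t. a power function of phi;
   the power function is unique modulo #[phi]) *)
Definition smooth_skew_morphism (phi : {perm gT}) : Prop :=
  phi 1 = 1 /\ exists pi, skew_power phi pi /\ skew_smooth phi pi.

End SkewDefs.

(* Smoothness says phi x = x c with every phi-iterate of c in Ker phi, so
   pi (phi x) = pi (x c) = sigma(c, pi x) = pi x modulo n, where
   sigma(y, k) = skew_sum y k = pi y + pi (phi y) + ... + pi (phi^(k-1) y)
   is the power function of phi^k at y.  Hence pi is phi-invariant, sigma(y, k) = k pi y,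
   and the identity pi (x y) = sigma(y, pi x) makes pi multiplicative; with
   pi 1 = 1 its values are units.  Conversely, a psi-invariant multiplicative
   power function rho with rho 1 = 1 makes any permutation psi smooth, because
   x^-1 psi x then lies in the kernel together with its iterates.  Powers,
   conjugates by automorphisms and induced permutations of invariant quotients
   inherit such power functions, and modulo N = Ker phi the induced permutation
   is trivial since x^-1 phi x lies in N. *)
From HB Require Import structures.
From mathcomp Require Import all_boot all_fingroup cyclic.
Local Open Scope group_scope.
Set Implicit Arguments. Unset Strict Implicit.

Lemma congr_mod_dvd a b m d : a = b %[mod m] -> (d %| m)%N -> a = b %[mod d].
Proof. by move=> eq_ab dv_dm; rewrite -(modn_dvdm a dv_dm) eq_ab modn_dvdm. Qed.

Lemma sum_congr_mod (f : nat -> nat) a m k :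
  (forall i, f i = a %[mod m]) -> \sum_(i < k) f i = (k * a)%N %[mod m].
Proof.
move=> eq_fa; elim: k => [|k IHk]; first by rewrite big_ord0.
by rewrite big_ord_recr /= -modnDm IHk eq_fa modnDm mulSnr.
Qed.

Lemma mem_bigcap_seq (T : finType) (r : seq nat) (F : nat -> {set T}) x :
  (x \in \big[@setI T/setT]_(i <- r) F i) = all (fun i => x \in F i) r.
Proof.
rewrite (big_morph (fun A : {set T} => x \in A) (@in_setI T x) (in_setT x)).
exact: big_all.
Qed.

Section PermPowers.
Variables (T : finType) (p : {perm T}).

Lemma eq_perm_expg_mod a b :
  (forall y, (p ^+ a) y = (p ^+ b) y) -> a = b %[mod #[p]].
Proof. by move=> eq_ab; apply/eqP; rewrite -eq_expg_mod_order; apply/eqP/permP. Qed.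

Lemma permX_invariant_mod (f : T -> nat) m :
  (forall x, f (p x) = f x %[mod m]) -> forall i x, f ((p ^+ i) x) = f x %[mod m].
Proof.
move=> fp; elim=> [|i IHi] x; first by rewrite expg0 perm1.
by rewrite expgSr permM fp.
Qed.

End PermPowers.

Section SkewCore.
Variables (gT : finGroupType) (phi : {perm gT}) (pi : gT -> nat).
Local Notation n := #[phi].

Lemma mem_skew_core c :
  c \in skew_core phi pi <-> forall i, pi ((phi ^+ i) c) = 1 %[mod n].
Proof.
have n_gt0 : (0 < n)%N := order_gt0 phi.
rewrite /skew_core mem_bigcap_seq; split=> [/allP core_c i | ker_c].
  have j_range : (n - i %% n) \in index_iota 1 n.+1.
    by rewrite mem_index_iota ltnS leq_subr andbT subn_gt0 ltn_mod.
  have /imsetP[k] := core_c _ j_range; rewrite inE => /eqP ker_k ->.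
  rewrite -permM -expgD -expg_mod_order.
  have -> : ((n - i %% n + i) %% n = 0)%N.
    by rewrite -modnDmr subnK ?modnn // ltnW // ltn_mod.
  by rewrite expg0 perm1.
apply/allP=> i _.
have <- : (phi ^+ i) ((phi ^+ (i * n - i)) c) = c.
  rewrite -permM -expgD subnK ?leq_pmulr // mulnC expgM expg_order expg1n.
  exact: perm1.
by rewrite imset_f // inE; apply/eqP; apply: ker_c.
Qed.

End SkewCore.

Lemma skew_smooth_of_morph (gT : finGroupType) (psi : {perm gT}) (rho : gT -> nat) :
  rho 1 = 1 %[mod #[psi]] ->
  (forall x y, rho (x * y) = (rho x * rho y)%N %[mod #[psi]]) ->
  (forall x, rho (psi x) = rho x %[mod #[psi]]) ->
  skew_smooth psi rho.
Proof.
move=> rho1 rhoM rho_psi x; rewrite mem_lcoset; apply/mem_skew_core => i.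
rewrite (permX_invariant_mod rho_psi) rhoM -modnMm rho_psi modnMm -rhoM mulVg.
exact: rho1.
Qed.

Section AutSetT.
Variables (gT : finGroupType) (g : {perm gT}).
Hypothesis Aut_g : g \in Aut [set: gT].

Lemma Aut_setT_morph : {morph g : x y / x * y}.
Proof. by move=> x y; apply: (morphicP (Aut_morphic Aut_g)); rewrite inE. Qed.

Lemma Aut_perm1 : g 1 = 1.
Proof. by rewrite -(autmE Aut_g) morph1. Qed.

End AutSetT.

Section SmoothSkewMorphism.
Variables (gT : finGroupType) (phi : {perm gT}) (pi : gT -> nat).
Hypotheses (phi1 : phi 1 = 1) (phi_skew : skew_power phi pi).
Local Notation n := #[phi].

Definition skew_sum (x : gT) (k : nat) : nat := \sum_(i < k) pi ((phi ^+ i) x).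

Lemma skew_powerX k x y :
  (phi ^+ k) (x * y) = (phi ^+ k) x * (phi ^+ skew_sum x k) y.
Proof.
elim: k x y => [|k IHk] x y; first by rewrite /skew_sum big_ord0 !expg0 !perm1.
rewrite expgSr permM IHk phi_skew /skew_sum big_ord_recr /= expgD permM.
by rewrite -permM -expgSr permM.
Qed.

Lemma skew_power1 : pi 1 = 1 %[mod n].
Proof.
apply: eq_perm_expg_mod => y.
by rewrite expg1 -[in RHS](mul1g y) phi_skew phi1 mul1g.
Qed.

Lemma skew_powerM_sum x y : pi (x * y) = skew_sum y (pi x) %[mod n].
Proof.
apply: eq_perm_expg_mod => z; apply: (@mulgI _ (phi (x * y))).
have := phi_skew x (y * z).
by rewrite mulgA skew_powerX mulgA -phi_skew => <-.
Qed.

Hypothesis phi_smooth : skew_smooth phi pi.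

Lemma skew_smooth_core x : x^-1 * phi x \in skew_core phi pi.
Proof. by rewrite -mem_lcoset. Qed.

Lemma skew_power_perm x : pi (phi x) = pi x %[mod n].
Proof.
have /mem_skew_core core_c := skew_smooth_core x.
rewrite -{1}(mulKVg x (phi x)) skew_powerM_sum /skew_sum.
by rewrite (@sum_congr_mod _ _ _ _ core_c) muln1.
Qed.

Lemma skew_power_permX i x : pi ((phi ^+ i) x) = pi x %[mod n].
Proof. exact: (permX_invariant_mod skew_power_perm). Qed.

Lemma skew_sum_smooth x k : skew_sum x k = (k * pi x)%N %[mod n].
Proof.
apply: (@sum_congr_mod (fun i => pi ((phi ^+ i) x))) => i.
exact: skew_power_permX.
Qed.

Lemma skew_powerM x y : pi (x * y) = (pi x * pi y)%N %[mod n].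
Proof. by rewrite skew_powerM_sum skew_sum_smooth mulnC. Qed.

Lemma skew_power_coprime x : coprime (pi x) n.
Proof.
have pi_expg k : pi (x ^+ k) = (pi x ^ k)%N %[mod n].
  elim: k => [|k IHk]; first by rewrite expg0 expn0 skew_power1.
  by rewrite expgSr skew_powerM -modnMm IHk modnMm expnSr.
rewrite -(coprime_pexpl _ _ (order_gt0 x)) -coprime_modl -pi_expg expg_order.
by rewrite skew_power1 coprime_modl coprime1n.
Qed.

Lemma smooth_skew_morphismX k : smooth_skew_morphism (phi ^+ k).
Proof.
split.
  by elim: k => [|k IHk]; rewrite ?expg0 ?perm1 // expgSr permM IHk.
exists pi; split=> [x y|].
  rewrite skew_powerX -expgM; congr (_ * (_ : {perm gT}) y).
  by apply/eqP; rewrite eq_expg_mod_order skew_sum_smooth.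
have dvd_k := orderXdvd phi k.
apply: skew_smooth_of_morph => [|x y|x]; apply: congr_mod_dvd dvd_k.
- exact: skew_power1.
- exact: skew_powerM.
- exact: skew_power_permX.
Qed.

Lemma smooth_skew_morphismJ g :
  g \in Aut [set: gT] -> smooth_skew_morphism (g * phi * g^-1).
Proof.
move=> Aut_g; have Aut_gi : g^-1 \in Aut [set: gT] by rewrite groupV.
have gM := Aut_setT_morph Aut_g; have giM := Aut_setT_morph Aut_gi.
set psi := g * phi * g^-1.
have psiE : psi = phi ^ g^-1 by rewrite conjgE invgK mulgA.
have psiX k x : (psi ^+ k) x = g^-1 ((phi ^+ k) (g x)).
  by rewrite psiE -conjXg conjgE invgK !permM.
have psi1 x : psi x = g^-1 (phi (g x)) by rewrite -(expg1 psi) psiX.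
split; first by rewrite psi1 (Aut_perm1 Aut_g) phi1 (Aut_perm1 Aut_gi).
exists (fun x => pi (g x)); split=> [x y|].
  by rewrite psiX !psi1 gM phi_skew giM.
have order_psi : #[psi] = n by rewrite psiE orderJ.
apply: skew_smooth_of_morph; rewrite order_psi.
- by rewrite (Aut_perm1 Aut_g) skew_power1.
- by move=> x y; rewrite gM skew_powerM.
- by move=> x; rewrite psi1 permKV skew_power_perm.
Qed.

Section Quotient.
Variable N : {group gT}.
Hypotheses (N_normal : N <| [set: gT]) (phiN : phi @: N = N).

Lemma normal_setT_norm x : x \in 'N(N).
Proof. by apply: (subsetP (normal_norm N_normal)); rewrite inE. Qed.

Lemma coset_setTM x y : coset N (x * y) = coset N x * coset N y.
Proof. by rewrite coset_morphM ?normal_setT_norm. Qed.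

Lemma mem_skew_permX k m : m \in N -> (phi ^+ k) m \in N.
Proof.
elim: k m => [|k IHk] m Nm; first by rewrite expg0 perm1.
by rewrite expgSr permM -phiN imset_f ?IHk.
Qed.

Lemma coset_skew_permX k x y :
  coset N x = coset N y -> coset N ((phi ^+ k) x) = coset N ((phi ^+ k) y).
Proof.
move=> eq_xy; have Nxy : x^-1 * y \in N.
  apply: coset_idr; first by rewrite normal_setT_norm.
  by rewrite coset_setTM -eq_xy -coset_setTM mulVg coset_id.
by rewrite -(mulKVg x y) skew_powerX coset_kerr // mem_skew_permX.
Qed.

Definition skew_quotient_fun k (C : coset_of N) := coset N ((phi ^+ k) (repr C)).

Lemma skew_quotient_funE k x : skew_quotient_fun k (coset N x) = coset N ((phi ^+ k) x).
Proof. by apply: coset_skew_permX; rewrite coset_reprK. Qed.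

Lemma skew_quotient_funK : cancel (skew_quotient_fun 1) (skew_quotient_fun n.-1).
Proof.
move=> C; rewrite -{1}(coset_reprK C) !skew_quotient_funE -permM -expgD add1n.
by rewrite prednK ?order_gt0 // expg_order perm1 coset_reprK.
Qed.

Definition skew_quotient : {perm coset_of N} := perm (can_inj skew_quotient_funK).

Lemma skew_quotientX k x : (skew_quotient ^+ k) (coset N x) = coset N ((phi ^+ k) x).
Proof.
elim: k => [|k IHk]; first by rewrite !expg0 !perm1.
by rewrite !expgSr !permM IHk permE skew_quotient_funE.
Qed.

Lemma skew_quotientE x : skew_quotient (coset N x) = coset N (phi x).
Proof. by rewrite -(expg1 skew_quotient) skew_quotientX. Qed.

Lemma order_skew_quotient_dvd : (#[skew_quotient] %| n)%N.
Proof.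
rewrite order_dvdn; apply/eqP/permP => C.
by rewrite -(coset_reprK C) skew_quotientX expg_order !perm1.
Qed.

Definition quotient_power (C : coset_of N) : nat := pi (repr C).

Lemma quotient_powerE x : quotient_power (coset N x) = pi x %[mod #[skew_quotient]].
Proof.
have coset_phi a b : coset N a = coset N b -> coset N (phi a) = coset N (phi b).
  by move/(coset_skew_permX 1); rewrite !expg1.
apply: eq_perm_expg_mod => C; rewrite -(coset_reprK C) !skew_quotientX.
set u := repr (coset N x); set y := repr C.
have eq_ux : coset N u = coset N x by rewrite coset_reprK.
apply: (@mulgI _ (coset N (phi u))); rewrite {2}(coset_phi _ _ eq_ux).
by rewrite -!coset_setTM -!phi_skew; apply: coset_phi; rewrite !coset_setTM eq_ux.
Qed.

Lemma skew_power_quotient : skew_power skew_quotient quotient_power.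
Proof.
move=> C D; rewrite -(coset_reprK C) -(coset_reprK D).
set x := repr C; set y := repr D.
have -> : skew_quotient ^+ quotient_power (coset N x) = skew_quotient ^+ pi x.
  by apply/eqP; rewrite eq_expg_mod_order quotient_powerE.
by rewrite -coset_setTM !skew_quotientE skew_quotientX phi_skew coset_setTM.
Qed.

Lemma skew_smooth_quotient : skew_smooth skew_quotient quotient_power.
Proof.
have dvd_q := order_skew_quotient_dvd.
apply: skew_smooth_of_morph => [|C D|C].
- by rewrite -(coset_id (group1 N)) quotient_powerE (congr_mod_dvd skew_power1).
- rewrite -(coset_reprK C) -(coset_reprK D) -coset_setTM !quotient_powerE.
  rewrite -modnMm !quotient_powerE modnMm; exact: congr_mod_dvd (skew_powerM _ _) dvd_q.
- rewrite -(coset_reprK C) skew_quotientE !quotient_powerE.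
  exact: congr_mod_dvd (skew_power_perm _) dvd_q.
Qed.

Lemma smooth_skew_morphism_quotient : smooth_skew_morphism skew_quotient.
Proof.
split; first by rewrite -(coset_id (group1 N)) skew_quotientE phi1.
by exists quotient_power; split; [apply: skew_power_quotient | apply: skew_smooth_quotient].
Qed.

Lemma skew_quotient_ker : (N : {set gT}) = skew_ker phi pi -> skew_quotient = 1.
Proof.
move=> N_ker; apply/permP => C; rewrite -(coset_reprK C) skew_quotientE perm1.
move: (repr C) => x; rewrite -{1}(mulKVg x (phi x)) coset_kerr // N_ker inE.
by have /mem_skew_core/(_ 0%N) := skew_smooth_core x; rewrite expg0 perm1 => /eqP.
Qed.

End Quotient.

End SmoothSkewMorphism.

Theorem theorem4 (gT : finGroupType) (phi : {perm gT}) (pi : gT -> nat) :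
  phi 1 = 1 -> skew_power phi pi -> skew_smooth phi pi ->
  [/\ (forall x : gT, coprime (pi x) #[phi]),
      (forall x y : gT, pi (x * y) = (pi x * pi y)%N %[mod #[phi]]) &
      [set x : gT | pi x == 1 %[mod #[phi]]] = skew_ker phi pi] /\
  [/\ (forall N : {group gT}, N <| [set: gT] -> phi @: N = N ->
         exists phibar : {perm coset_of N},
           (forall x : gT, phibar (coset N x) = coset N (phi x)) /\
           smooth_skew_morphism phibar /\
           ((N : {set gT}) = skew_ker phi pi -> phibar = 1)),
      (forall k : nat, (0 < k)%N -> smooth_skew_morphism (phi ^+ k)) &
      (forall gamma : {perm gT}, gamma \in Aut [set: gT] ->
         smooth_skew_morphism (gamma * phi * gamma^-1))].
Proof.
move=> phi1 phi_skew phi_smooth; split.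
  by split=> [x|x y|]; [apply: skew_power_coprime | apply: skew_powerM |].
split=> [N N_normal phiN | k _ | g Aut_g].
- exists (skew_quotient phi_skew N_normal phiN); split; first exact: skew_quotientE.
  split; first exact: smooth_skew_morphism_quotient.
  exact: skew_quotient_ker.
- exact: smooth_skew_morphismX.
- exact: smooth_skew_morphismJ.
Qed.
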